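(* Let $\alpha,\beta$ be sets and $\odot:\beta\times\beta\to\beta$. Calls $\mathrm{reduceByKey}(\odot,\mathit{pairRdd})$ (with pair RDDs over $\alpha\times\beta$) have deterministic outcomes if and only if calls $\mathrm{reduce}(\odot,\mathit{rdd})$ (with RDDs over $\beta$) have deterministic outcomes.
   Context: Lists are finite; $\mathbin{+\!\!+}$ is concatenation. $\mathrm{foldl}(f,b,[\,])=b$, $\mathrm{foldl}(f,b,[x_1,\dots,x_n])=f(\cdots f(f(b,x_1),x_2)\cdots,x_n)$; $\mathrm{reducel}(f,[x_1,\dots,x_n])=\mathrm{foldl}(f,x_1,[x_2,\dots,x_n])$ for nonempty lists. An RDD over $X$ is a list of lists over $X$; a pair RDD is an RDD over $\alpha\times\beta$ (key, value). A partitioning is a function $P$ sending each list $L$ to an RDD obtained by splitting $L$ into consecutive pieces $p_1,\dots,p_n$ with $p_1\mathbin{+\!\!+}\cdots\mathbin{+\!\!+}p_n=L$ and then arbitrarily permuting $[p_1,\dots,p_n]$ (for $\mathrm{reduce}$, $L$ is nonempty and all pieces are nonempty). $\mathrm{filterkey}(k,L)$ is the list of values $v$ of the pairs $(k,v)$ in $L$, in order. $\mathrm{reduce}_{\mathrm{det}}(\odot,[q_1,\dots,q_m])=\mathrm{reducel}(\odot,[\mathrm{reducel}(\odot,q_1),\dots,\mathrm{reducel}(\odot,q_m)])$; calls to $\mathrm{reduce}$ have deterministic outcomes if $\mathrm{reduce}_{\mathrm{det}}(\odot,P(L))=\mathrm{reducel}(\odot,L)$ for all nonempty $L$ over $\beta$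 and all such partitionings $P$. $\mathrm{reduceByKey}_{\mathrm{det}}(\odot,[q_1,\dots,q_m])$ is a pair RDD in which each key $k$ occurring in some $q_i$ appears exactly once, with value $\mathrm{reducel}(\odot,[c_{i_1},\dots,c_{i_r}])$, where $i_1<\dots<i_r$ are the indices $i$ with $k$ occurring in $q_i$ and $c_i=\mathrm{reducel}(\odot,\mathrm{filterkey}(k,q_i))$; $\mathrm{lookup}(k,R)$ denotes the value associated with key $k$ in the pair RDD $R$. Calls $\mathrm{reduceByKey}(\odot,\mathit{pairRdd})$ have deterministic outcomes if $\mathrm{lookup}(k,\mathrm{reduceByKey}_{\mathrm{det}}(\odot,P(L)))=\mathrm{reducel}(\odot,\mathrm{filterkey}(k,L))$ for all lists $L$ of pairs, partitionings $P$, and keys $k$ occurring in $L$. *)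

(* Classical decidable equality is used for keys (sets in the
   paper have classical, hence decidable, equality). *)
From Stdlib Require Import List Permutation ClassicalEpsilon.
Import ListNotations.
Set Implicit Arguments.

Definition ceq_dec (T : Type) (x y : T) : {x = y} + {x <> y} :=
  excluded_middle_informative (x = y).

(* reducel(f, [x1,...,xn]) = foldl(f, x1, [x2,...,xn]); None on the empty
   list (where reducel is undefined). *)
Definition reducel (B : Type) (f : B -> B -> B) (L : list B) : option B :=
  match L with
  | [] => None
  | x :: xs => Some (fold_left f xs x)
  end.

Definition opt_to_list (B : Type) (o : option B) : list B :=
  match o with Some b => [b] | None => [] end.

(* reduce_det(f, [q1..qm]) = reducel(f, [reducel(f,q1),...,reducel(f,qm)])
   (pieces are nonempty for reduce, so every reducel(f,qi) is defined) *)
Definition reduce_det (B : Type) (f : B -> B -> B) (qs : list (list B)) : option B :=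
  reducel f (flat_map (fun q => opt_to_list (reducel f q)) qs).

Definition filterkey (A B : Type) (k : A) (L : list (A * B)) : list B :=
  map snd (filter (fun p => if ceq_dec (fst p) k then true else false) L).

Fixpoint dedup (A : Type) (l : list A) : list A :=
  match l with
  | [] => []
  | x :: xs => x :: filter (fun y => if ceq_dec y x then false else true) (dedup xs)
  end.

(* the value for key k: reducel over [c_{i1},...,c_{ir}], where i1<...<ir are
   the indices of the pieces in which k occurs, c_i = reducel(f, filterkey k q_i) *)
Definition key_value (A B : Type) (f : B -> B -> B) (qs : list (list (A * B))) (k : A)
  : option B :=
  reducel f (flat_map (fun q => opt_to_list (reducel f (filterkey k q))) qs).

(* reduceByKey_det(f, [q1..qm]) : a pair RDD (here as a single list of pairs)
   in which each key occurring in some q_i appears exactly once *)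
Definition reduceByKey_det (A B : Type) (f : B -> B -> B) (qs : list (list (A * B)))
  : list (A * B) :=
  flat_map (fun k => match key_value f qs k with
                     | Some v => [(k, v)]
                     | None => [] end)
           (dedup (map fst (concat qs))).

Definition lookup (A B : Type) (k : A) (R : list (A * B)) : option B :=
  option_map snd (find (fun p => if ceq_dec (fst p) k then true else false) R).

Definition partitioning (X : Type) (P : list X -> list (list X)) : Prop :=
  forall L, exists ps, concat ps = L /\ Permutation ps (P L).

Definition partitioning_ne (X : Type) (P : list X -> list (list X)) : Prop :=
  forall L, L <> [] ->
    exists ps, Forall (fun p => p <> []) ps /\ concat ps = L /\ Permutation ps (P L).

Definition reduce_deterministic (B : Type) (f : B -> B -> B) : Prop :=
  forall (P : list B -> list (list B)), partitioning_ne P ->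
    forall L : list B, L <> [] -> reduce_det f (P L) = reducel f L.

Definition reduceByKey_deterministic (A B : Type) (f : B -> B -> B) : Prop :=
  forall (P : list (A * B) -> list (list (A * B))), partitioning P ->
    forall (L : list (A * B)) (k : A), In k (map fst L) ->
      lookup k (reduceByKey_det f (P L)) = reducel f (filterkey k L).

From Stdlib Require Import List Permutation.
Import ListNotations.
Set Implicit Arguments.

(* A partitioning can be prescribed freely at a single list, so each determinism
   notion says exactly that the pieces of any split of a list, taken in any order,
   combine to the left fold of the list.  For a key k, the reduceByKey value is the
   reduce of the pieces filtered to k, and filtering commutes with concatenation;
   conversely, tagging every element with one fixed key (here the inhabitant of α
   is needed) turns reduce into reduceByKey. *)

Section Lists.

Variable X : Type.

Lemma Permutation_filter (g : X -> bool) (l l' : list X) :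
  Permutation l l' -> Permutation (filter g l) (filter g l').
Proof.
  induction 1; simpl; try destruct (g x); try destruct (g y); eauto using Permutation.
Qed.

Lemma Permutation_concat (ps qs : list (list X)) :
  Permutation ps qs -> Permutation (concat ps) (concat qs).
Proof.
  intro Hperm.
  rewrite <- (map_id ps), <- (map_id qs), <- !flat_map_concat_map.
  now apply Permutation_flat_map.
Qed.

Definition nonnil (l : list X) : bool := match l with [] => false | _ => true end.

Lemma concat_filter_nonnil (ps : list (list X)) : concat (filter nonnil ps) = concat ps.
Proof. induction ps as [|[|x p] ps IH]; simpl; congruence. Qed.

Lemma Forall_filter_nonnil (ps : list (list X)) : Forall (fun p => p <> []) (filter nonnil ps).
Proof.
  apply Forall_forall; intros [|x p] Hp; [|discriminate].
  now apply filter_In in Hp.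
Qed.

Lemma in_dedup (l : list X) (x : X) : In x (dedup l) <-> In x l.
Proof.
  induction l as [|y l IH]; simpl; [tauto|].
  rewrite filter_In, IH.
  destruct (ceq_dec x y); subst; simpl; intuition discriminate.
Qed.

End Lists.

Arguments nonnil {X}.

Section Partitionings.

Variable X : Type.

Definition split_at (L : list X) (qs : list (list X)) (M : list X) : list (list X) :=
  if ceq_dec M L then qs else [M].

Lemma split_at_self (L : list X) (qs : list (list X)) : split_at L qs L = qs.
Proof. unfold split_at; now destruct (ceq_dec L L). Qed.

Lemma partitioning_split_at (ps qs : list (list X)) :
  Permutation ps qs -> partitioning (split_at (concat ps) qs).
Proof.
  intros Hperm M; unfold split_at.
  destruct (ceq_dec M (concat ps)) as [->|_]; eauto.
  exists [M]; simpl; now rewrite app_nil_r.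
Qed.

Lemma partitioning_ne_split_at (ps qs : list (list X)) :
  Forall (fun p => p <> []) ps -> Permutation ps qs ->
  partitioning_ne (split_at (concat ps) qs).
Proof.
  intros Hne Hperm M HM; unfold split_at.
  destruct (ceq_dec M (concat ps)) as [->|_]; eauto.
  exists [M]; simpl; rewrite app_nil_r; auto.
Qed.

End Partitionings.

Section Keys.

Variables (A B : Type) (f : B -> B -> B).

Lemma reduce_det_filter_nonnil (qs : list (list B)) :
  reduce_det f (filter nonnil qs) = reduce_det f qs.
Proof.
  unfold reduce_det; f_equal.
  induction qs as [|[|x q] qs IH]; simpl; congruence.
Qed.

Lemma filterkey_concat (k : A) (ps : list (list (A * B))) :
  filterkey k (concat ps) = concat (map (filterkey k) ps).
Proof. unfold filterkey; now rewrite <- concat_filter_map, concat_map, map_map. Qed.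

Lemma filterkey_pair (a : A) (q : list B) : filterkey a (map (pair a) q) = q.
Proof.
  unfold filterkey; induction q as [|v q IH]; simpl; [easy|].
  destruct (ceq_dec a a); [|easy]; simpl; congruence.
Qed.

Lemma filterkey_neq_nil (k : A) (L : list (A * B)) :
  In k (map fst L) -> filterkey k L <> [].
Proof.
  intros Hk Hnil; apply in_map_iff in Hk as [[k' v] [Hkk' Hkv]]; simpl in Hkk'; subst k'.
  assert (Hv : In v (filterkey k L)).
  { apply in_map_iff; exists (k, v); split; [easy|].
    apply filter_In; split; [easy|]; simpl; now destruct (ceq_dec k k). }
  now rewrite Hnil in Hv.
Qed.

Lemma key_value_reduce_det (qs : list (list (A * B))) (k : A) :
  key_value f qs k = reduce_det f (map (filterkey k) qs).
Proof. unfold key_value, reduce_det; now rewrite !flat_map_concat_map, map_map. Qed.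

Lemma lookup_graph (h : A -> option B) (ks : list A) (k : A) :
  In k ks ->
  lookup k (flat_map (fun k' => match h k' with Some v => [(k', v)] | None => [] end) ks)
  = h k.
Proof.
  (* A key whose value is None contributes no pair, hence the weaker hypothesis. *)
  enough (Hgen : In k ks \/ h k = None -> lookup k (flat_map
            (fun k' => match h k' with Some v => [(k', v)] | None => [] end) ks) = h k)
    by auto.
  unfold lookup; induction ks as [|k' ks IH]; simpl; intros Hk.
  - destruct Hk as [[] | ->]; reflexivity.
  - destruct (ceq_dec k' k) as [->|Hneq].
    + destruct (h k) eqn:Hhk; simpl; auto.
      now destruct (ceq_dec k k).
    + destruct (h k'); simpl; [destruct (ceq_dec k' k); [easy|]|];
        apply IH; destruct Hk as [[Heq | Hin] | Hnone]; auto; contradiction.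
Qed.

Lemma lookup_reduceByKey_det (qs : list (list (A * B))) (k : A) :
  In k (map fst (concat qs)) -> lookup k (reduceByKey_det f qs) = key_value f qs k.
Proof. intro Hk; apply lookup_graph, in_dedup, Hk. Qed.

Lemma key_value_pair (a : A) (qs : list (list B)) :
  key_value f (map (map (pair a)) qs) a = reduce_det f qs.
Proof.
  rewrite key_value_reduce_det, map_map.
  now rewrite (map_ext _ _ (filterkey_pair a)), map_id.
Qed.

Lemma in_keys_Permutation (ps qs : list (list (A * B))) (k : A) :
  Permutation ps qs -> In k (map fst (concat ps)) -> In k (map fst (concat qs)).
Proof. intro Hperm; apply Permutation_in, Permutation_map, Permutation_concat, Hperm. Qed.

End Keys.

Definition reduce_invariant (B : Type) (f : B -> B -> B) : Prop :=
  forall ps qs : list (list B), concat ps <> [] -> Permutation ps qs ->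
    reduce_det f qs = reducel f (concat ps).

Definition key_value_invariant (A B : Type) (f : B -> B -> B) : Prop :=
  forall (ps qs : list (list (A * B))) (k : A),
    In k (map fst (concat ps)) -> Permutation ps qs ->
    key_value f qs k = reducel f (filterkey k (concat ps)).

Section Invariance.

Variables (A B : Type) (f : B -> B -> B).

Lemma reduce_deterministic_iff_invariant :
  reduce_deterministic f <-> reduce_invariant f.
Proof.
  split.
  - intros Hdet ps qs Hne Hperm.
    (* Partitionings for reduce have nonempty pieces; empty ones are invisible to reduce_det. *)
    rewrite <- reduce_det_filter_nonnil, <- (concat_filter_nonnil ps).
    rewrite <- (split_at_self (concat (filter nonnil ps)) (filter nonnil qs)).
    apply Hdet; [|now rewrite concat_filter_nonnil].
    apply partitioning_ne_split_at;
      [apply Forall_filter_nonnil | now apply Permutation_filter].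
  - intros Hinv P HP L HL.
    destruct (HP L HL) as (ps & _ & <- & Hperm).
    now apply Hinv.
Qed.

Lemma reduceByKey_deterministic_iff_invariant :
  reduceByKey_deterministic A f <-> key_value_invariant A f.
Proof.
  split.
  - intros Hdet ps qs k Hk Hperm.
    rewrite <- lookup_reduceByKey_det by now apply (in_keys_Permutation k Hperm).
    rewrite <- (split_at_self (concat ps) qs).
    now apply Hdet; [apply partitioning_split_at|].
  - intros Hinv P HP L k Hk.
    destruct (HP L) as (ps & <- & Hperm).
    rewrite lookup_reduceByKey_det by now apply (in_keys_Permutation k Hperm).
    now apply Hinv.
Qed.

Lemma key_value_invariant_of_reduce_invariant :
  reduce_invariant f -> key_value_invariant A f.
Proof.
  intros Hinv ps qs k Hk Hperm.
  rewrite key_value_reduce_det, filterkey_concat.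
  apply Hinv; [|now apply Permutation_map].
  rewrite <- filterkey_concat; now apply filterkey_neq_nil.
Qed.

Lemma reduce_invariant_of_key_value_invariant (a : A) :
  key_value_invariant A f -> reduce_invariant f.
Proof.
  intros Hinv ps qs Hne Hperm.
  rewrite <- (key_value_pair f a qs), Hinv with (ps := map (map (pair a)) ps).
  - now rewrite <- concat_map, filterkey_pair.
  - rewrite <- concat_map, map_map.
    destruct (concat ps); [contradiction | now left].
  - now apply Permutation_map.
Qed.

End Invariance.

Theorem proposition4 (A B : Type) (HA : inhabited A) (f : B -> B -> B) :
  reduceByKey_deterministic A f <-> reduce_deterministic f.
Proof.
  destruct HA as [a].
  rewrite reduceByKey_deterministic_iff_invariant, reduce_deterministic_iff_invariant.
  split.
  - apply reduce_invariant_of_key_value_invariant, a.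
  - apply key_value_invariant_of_reduce_invariant.
Qed.
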